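(* Let $A>0$ (area of the subregion), $E_{\rm b}>0$ (battery capacity), $P_{\rm c}>0$ (on-board circuit power), $\lambda>0$, $S>0$, and suppose $h_{\rm n}^*\ge0$ minimizes $\Gamma$ on $[0,\infty)$. For $R>0$ and $h\ge0$ define the UAV recall frequency $$\Phi(R,h)=\frac{A}{\pi R^2}\cdot\frac{P_{\rm t}(R,\lambda,h,S)+P_{\rm c}}{E_{\rm b}}.$$ Then for all $R>0$, $h\ge 0$, $$\Phi(R,h)\ \ge\ \frac{2A}{\pi E_{\rm b}}\sqrt{\lambda(2^S-1)\,P_{\rm c}\,\Gamma(h_{\rm n}^* )},$$ and equality holds at $(R^*,h^* )$ with $$R^*=\sqrt[4]{\frac{P_{\rm c}}{\lambda(2^S-1)\,\Gamma(h_{\rm n}^* )}},\qquad h^*=R^*h_{\rm n}^*.$$ Consequently, for a region split into subregions $\beta=1,\dots,\kappa$ with parameters $A(\beta),\lambda(\beta)$ (and common $E_{\rm b},P_{\rm c},S$), the total $\sum_{\beta}\Phi_\beta(R(\beta),h(\beta))$ is minimized over $R(\beta)>0,h(\beta)\ge0$ by choosing $(R(\beta),h(\beta))=(R^*(\beta),R^*(\beta)h_{\rm n}^* )$ in each subregion, with $R^*(\beta)$ given by the formula above with $\lambda=\lambda(\beta)$.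
   Context: Fix constants $f_{\rm c}>0$, $c>0$, $N_0>0$, $\eta_0>0,\eta_1>0$, $a>0$, $b>0$. For $r>0$, $h\ge 0$, let $\theta(r,h)=\frac{180}{\pi}\arctan(h/r)$, $P_0(r,h)=\dfrac{1}{1+a\exp(-b[\theta(r,h)-a])}$, and $$\bar L(r,h)=\left(\frac{4\pi f_{\rm c}}{c}\right)^2 (r^2+h^2)\,\big(\eta_1+P_0(r,h)(\eta_0-\eta_1)\big).$$ For $R>0$, $\lambda>0$, $h\ge0$, $S>0$, the transmit power is $P_{\rm t}(R,\lambda,h,S)=\lambda\int_0^R 2\pi r\,\bar L(r,h)\,N_0\,(2^S-1)\,dr$, and the kernel function is $\Gamma(x):=P_{\rm t}(1,1,x,1)=\int_0^1 2\pi r\,\bar L(r,x)\,N_0\,dr$ for $x\ge0$. The number of UAVs covering a subregion of area $A$ with coverage radius $R$ is $A/(\pi R^2)$; $\Phi_\beta$ denotes $\Phi$ computed with the parameters $A(\beta),\lambda(\beta)$ of subregion $\beta$. *)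

From Stdlib Require Import Reals Lra ClassicalEpsilon.
Open Scope R_scope.

(* Riemann integral of f over [lo,hi] (lo <= hi); if f is not Riemann
   integrable there the value is unspecified (chosen by epsilon). *)
Definition Rint (f : R -> R) (lo hi : R) : R :=
  epsilon (inhabits 0)
    (fun v => exists pr : Riemann_integrable f lo hi, RiemannInt pr = v).

Definition theta (r h : R) : R := (180 / PI) * atan (h / r).

Definition P0 (a b : R) (r h : R) : R :=
  1 / (1 + a * exp (- b * (theta r h - a))).

Definition Lbar (fc c eta0 eta1 a b : R) (r h : R) : R :=
  (4 * PI * fc / c) ^ 2 * (r ^ 2 + h ^ 2)
  * (eta1 + P0 a b r h * (eta0 - eta1)).

Definition Pt (fc c N0 eta0 eta1 a b : R) (Rad lam h S : R) : R :=
  lam * Rint (fun r => 2 * PI * r * Lbar fc c eta0 eta1 a b r h * N0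
                       * (Rpower 2 S - 1)) 0 Rad.

Definition Gamma (fc c N0 eta0 eta1 a b : R) (x : R) : R :=
  Pt fc c N0 eta0 eta1 a b 1 1 x 1.

Definition Phi (fc c N0 eta0 eta1 a b : R) (A Eb Pc lam S : R) (Rad h : R) : R :=
  A / (PI * Rad ^ 2) * ((Pt fc c N0 eta0 eta1 a b Rad lam h S + Pc) / Eb).

Definition Rstar (fc c N0 eta0 eta1 a b : R) (Pc lam S hn : R) : R :=
  Rpower (Pc / (lam * (Rpower 2 S - 1) * Gamma fc c N0 eta0 eta1 a b hn)) (1/4).

Fixpoint rsum (f : nat -> R) (n : nat) : R :=
  match n with
  | O => 0
  | S m => rsum f m + f m
  end.

(* The path loss is homogeneous of degree two in (r, h) and the elevation
   angle depends only on h / r, so the substitution r = R y gives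
   P_t(R, lam, h, S) = lam (2^S - 1) R^4 Gamma(h / R).  Hence
   Phi(R, h) = A / (pi E_b) (lam (2^S - 1) Gamma(h / R) R^2 + P_c / R^2),
   which is at least the same expression with Gamma(h / R) replaced by its
   minimum Gamma(h_n^* ), and AM-GM in R^2 bounds that from below by the
   claimed value, with equality for R^4 = P_c / (lam (2^S - 1) Gamma(h_n^* ))
   and h / R = h_n^*.  The bound for several subregions holds termwise. *)

From Stdlib Require Import Reals Lra Lia ClassicalEpsilon.
From Coquelicot Require Import Coquelicot.
Open Scope R_scope.

Lemma Rint_RInt (f : R -> R) (lo hi : R) :
  ex_RInt f lo hi -> Rint f lo hi = RInt f lo hi.
Proof.
  intros Hf.
  assert (Hv : exists v, exists pr : Riemann_integrable f lo hi, RiemannInt pr = v)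
    by (exists (RiemannInt (ex_RInt_Reals_0 f lo hi Hf)); eexists; reflexivity).
  unfold Rint; destruct (epsilon_spec (inhabits 0) _ Hv) as [pr <-].
  symmetry; apply RInt_Reals.
Qed.

Lemma continuous_mult_vanishing_bounded (f g : R -> R) (x M : R) :
  continuous f x -> f x = 0 -> (forall y, Rabs (g y) <= M) ->
  continuous (fun y => f y * g y) x.
Proof.
  intros Hf Hfx HgM.
  assert (HM : 0 <= M) by (eapply Rle_trans; [apply Rabs_pos | apply (HgM 0)]).
  unfold continuous; rewrite Hfx, Rmult_0_l.
  apply filterlim_locally; intros eps.
  assert (Hd : 0 < eps / (M + 1)) by (apply Rdiv_lt_0_compat; [apply cond_pos | lra]).
  unfold continuous in Hf; rewrite Hfx in Hf.
  apply (filter_imp (fun y => ball 0 (mkposreal _ Hd) (f y))).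
  - intros y Hy; change (Rabs (f y * g y - 0) < eps).
    change (Rabs (f y - 0) < eps / (M + 1)) in Hy.
    rewrite Rminus_0_r in *; rewrite Rabs_mult.
    assert (Hfy : Rabs (f y) * (M + 1) < eps).
    { apply (Rmult_lt_compat_r (M + 1)) in Hy; [|lra].
      now replace (eps / (M + 1) * (M + 1)) with (pos eps) in Hy by (field; lra). }
    pose proof (HgM y); pose proof (Rabs_pos (f y)); nra.
  - exact (proj1 (filterlim_locally f 0) Hf (mkposreal _ Hd)).
Qed.

Lemma two_sqrt_mul_le (p q t : R) :
  0 <= p -> 0 <= q -> 0 < t -> 2 * sqrt (p * q) <= p * t + q / t.
Proof.
  intros Hp Hq Ht.
  rewrite sqrt_mult by assumption.
  assert (Hgap : p * t + q / t - 2 * (sqrt p * sqrt q)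
                 = (sqrt p * t - sqrt q) ^ 2 / t).
  { rewrite <- (sqrt_sqrt p) at 1 by assumption.
    rewrite <- (sqrt_sqrt q) at 1 by assumption. field; lra. }
  assert (0 <= (sqrt p * t - sqrt q) ^ 2 / t)
    by (apply Rdiv_le_0_compat; [apply pow2_ge_0 | lra]).
  lra.
Qed.

Lemma two_sqrt_mul_eq (p q : R) :
  0 < p -> 0 < q -> p * sqrt (q / p) + q / sqrt (q / p) = 2 * sqrt (p * q).
Proof.
  intros Hp Hq.
  assert (Hs : 0 < sqrt (q / p)) by (apply sqrt_lt_R0, Rdiv_lt_0_compat; lra).
  rewrite sqrt_div_alt, sqrt_mult by lra.
  assert (0 < sqrt p) by (apply sqrt_lt_R0; lra).
  assert (0 < sqrt q) by (apply sqrt_lt_R0; lra).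
  rewrite <- (sqrt_sqrt p) at 1 by lra.
  rewrite <- (sqrt_sqrt q) at 2 by lra.
  field; lra.
Qed.

Lemma Rpower_quarter_sqr (x : R) : 0 < x -> Rpower x (1 / 4) ^ 2 = sqrt x.
Proof.
  intros Hx.
  rewrite <- Rpower_pow by (unfold Rpower; apply exp_pos).
  rewrite Rpower_mult, <- Rpower_sqrt by assumption.
  f_equal; simpl; field.
Qed.

Lemma rsum_le_compat (f g : nat -> R) (n : nat) :
  (forall i, (i < n)%nat -> f i <= g i) -> rsum f n <= rsum g n.
Proof.
  induction n as [|n IH]; intros Hfg; simpl; [lra|].
  apply Rplus_le_compat; [apply IH; intros i Hi|]; apply Hfg; lia.
Qed.

Section ChannelModel.

Variables fc c N0 eta0 eta1 a b : R.
Hypotheses (Hfc : 0 < fc) (Hc : 0 < c) (HN0 : 0 < N0)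
  (Heta0 : 0 < eta0) (Heta1 : 0 < eta1) (Ha : 0 < a).

Let Gam := Gamma fc c N0 eta0 eta1 a b.

Definition power_density (h r : R) : R :=
  2 * PI * r * Lbar fc c eta0 eta1 a b r h * N0.

Let K := (4 * PI * fc / c) ^ 2.
Let Q (r h : R) := eta1 + P0 a b r h * (eta0 - eta1).

Lemma K_pos : 0 < K.
Proof.
  pose proof PI_RGT_0.
  apply pow_lt, Rdiv_lt_0_compat; [nra | lra].
Qed.

Lemma P0_bounds r h : 0 < P0 a b r h < 1.
Proof.
  unfold P0.
  assert (0 < a * exp (- b * (theta r h - a))) by (pose proof exp_pos (- b * (theta r h - a)); nra).
  split.
  - apply Rdiv_lt_0_compat; lra.
  - apply (Rmult_lt_reg_r (1 + a * exp (- b * (theta r h - a)))); [lra|].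
    unfold Rdiv; rewrite Rmult_assoc, Rinv_l; lra.
Qed.

Lemma Q_bounds r h : 0 < Q r h <= eta0 + eta1.
Proof. pose proof (P0_bounds r h); unfold Q; nra. Qed.

Lemma power_density_pos h r : 0 < r -> 0 < power_density h r.
Proof.
  intros Hr; pose proof PI_RGT_0; pose proof K_pos; pose proof (Q_bounds r h).
  assert (0 < r ^ 2 + h ^ 2) by (pose proof (pow2_ge_0 h); pose proof (pow_lt r 2 Hr); lra).
  change (0 < 2 * PI * r * (K * (r ^ 2 + h ^ 2) * Q r h) * N0).
  apply Rmult_lt_0_compat; [apply Rmult_lt_0_compat|]; [nra | | lra].
  apply Rmult_lt_0_compat; [apply Rmult_lt_0_compat|]; lra.
Qed.

Lemma power_density_continuous h r : continuous (power_density h) r.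
Proof.
  destruct (Req_dec r 0) as [->|Hr].
  (* At r = 0 the elevation angle jumps (h / 0 = 0), but the factor r
     times a bounded path-loss factor still tends to 0. *)
  - set (M := 2 * PI * N0 * K * (eta0 + eta1)).
    apply (continuous_ext (fun y => (y * (y ^ 2 + h ^ 2)) * (2 * PI * N0 * K * Q y h))).
    { intros y; simpl; unfold power_density, Lbar; fold K; fold (Q y h); ring. }
    apply continuous_mult_vanishing_bounded with M.
    + apply (ex_derive_continuous (V := R_CompleteNormedModule)); auto_derive; easy.
    + ring.
    + intros y; pose proof PI_RGT_0; pose proof K_pos; pose proof (Q_bounds y h).
      assert (0 < 2 * PI * N0 * K) by (apply Rmult_lt_0_compat; [nra | lra]).
      rewrite Rabs_pos_eq by nra; unfold M; nra.
  - apply (ex_derive_continuous (V := R_CompleteNormedModule)).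
    unfold power_density, Lbar, P0, theta; auto_derive.
    repeat split; auto.
    pose proof (exp_pos (- b * (180 / PI * atan (h * / r) + - a))); nra.
Qed.

Lemma ex_RInt_power_density h k lo hi :
  ex_RInt (fun r => power_density h r * k) lo hi.
Proof.
  apply (ex_RInt_continuous (V := R_CompleteNormedModule)); intros r _.
  apply (continuous_mult (power_density h) (fun _ => k));
    [apply power_density_continuous | apply continuous_const].
Qed.

Lemma power_density_scale h Rad y : Rad <> 0 ->
  power_density h (Rad * y) = Rad ^ 3 * power_density (h / Rad) y.
Proof.
  intros HRad; unfold power_density, Lbar, P0.
  replace (theta (Rad * y) h) with (theta y (h / Rad))
    by (unfold theta; do 2 f_equal; unfold Rdiv; rewrite Rinv_mult; ring).
  pose proof (exp_pos (- b * (theta y (h / Rad) - a))).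
  field; repeat split; [nra | assumption | lra].
Qed.

Lemma Gamma_RInt x : Gam x = RInt (power_density x) 0 1.
Proof.
  unfold Gam, Gamma, Pt.
  change (1 * Rint (fun r => power_density x r * (Rpower 2 1 - 1)) 0 1
          = RInt (power_density x) 0 1).
  rewrite Rint_RInt by apply ex_RInt_power_density.
  rewrite Rpower_1 by lra; rewrite Rmult_1_l.
  apply RInt_ext; intros r _; simpl; ring.
Qed.

Lemma Gamma_pos x : 0 < Gam x.
Proof.
  rewrite Gamma_RInt; apply RInt_gt_0; [lra | |].
  - intros r Hr; apply power_density_pos; lra.
  - intros r _; apply power_density_continuous.
Qed.

Lemma Pt_scale Rad lam h S : 0 < Rad ->
  Pt fc c N0 eta0 eta1 a b Rad lam h S
  = lam * (Rpower 2 S - 1) * Rad ^ 4 * Gam (h / Rad).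
Proof.
  intros HRad; rewrite Gamma_RInt; unfold Pt.
  set (k := Rpower 2 S - 1).
  change (lam * Rint (fun r => power_density h r * k) 0 Rad
          = lam * k * Rad ^ 4 * RInt (power_density (h / Rad)) 0 1).
  rewrite Rint_RInt by apply ex_RInt_power_density.
  pose proof (RInt_comp_lin (fun r => power_density h r * k) Rad 0 0 1
                (ex_RInt_power_density h k _ _)) as Hsubst.
  rewrite Rmult_0_r, Rmult_1_r, !Rplus_0_r in Hsubst; rewrite <- Hsubst.
  rewrite (RInt_ext _ (fun y => scal (k * Rad ^ 4) (power_density (h / Rad) y))).
  - rewrite (RInt_scal (V := R_CompleteNormedModule)).
    + change (lam * (k * Rad ^ 4 * RInt (power_density (h / Rad)) 0 1)
              = lam * k * Rad ^ 4 * RInt (power_density (h / Rad)) 0 1); ring.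
    + apply (ex_RInt_continuous (V := R_CompleteNormedModule)); intros y _.
      apply power_density_continuous.
  - intros y _; change (Rad * (power_density h (Rad * y + 0) * k)
                        = k * Rad ^ 4 * power_density (h / Rad) y).
    rewrite Rplus_0_r, power_density_scale by lra; ring.
Qed.

End ChannelModel.

Lemma Rpower2_sub1_pos (S : R) : 0 < S -> 0 < Rpower 2 S - 1.
Proof.
  intros HS; pose proof (Rpower_lt 2 0 S ltac:(lra) HS) as Hlt.
  rewrite Rpower_O in Hlt by lra; lra.
Qed.

Section RecallFrequency.

Variables fc c N0 eta0 eta1 a b : R.
Hypotheses (Hfc : 0 < fc) (Hc : 0 < c) (HN0 : 0 < N0)
  (Heta0 : 0 < eta0) (Heta1 : 0 < eta1) (Ha : 0 < a).
Variables Eb Pc S hn : R.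
Hypotheses (HEb : 0 < Eb) (HPc : 0 < Pc) (HS : 0 < S).

Let Gam := Gamma fc c N0 eta0 eta1 a b.
Let k := Rpower 2 S - 1.

Hypothesis Hmin : forall x, 0 <= x -> Gam hn <= Gam x.

Lemma Phi_scale A lam Rad h : 0 < Rad ->
  Phi fc c N0 eta0 eta1 a b A Eb Pc lam S Rad h
  = A / (PI * Eb) * (lam * k * Gam (h / Rad) * Rad ^ 2 + Pc / Rad ^ 2).
Proof.
  intros HRad; pose proof PI_RGT_0.
  unfold Phi; rewrite Pt_scale by assumption.
  fold k Gam; field; repeat split; lra.
Qed.

Lemma Phi_ge A lam Rad h : 0 < A -> 0 < lam -> 0 < Rad -> 0 <= h ->
  Phi fc c N0 eta0 eta1 a b A Eb Pc lam S Rad h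
  >= 2 * A / (PI * Eb) * sqrt (lam * k * Pc * Gam hn).
Proof.
  intros HA Hlam HRad Hh; pose proof PI_RGT_0.
  pose proof (Gamma_pos fc c N0 eta0 eta1 a b Hfc Hc HN0 Heta0 Heta1 Ha hn) as Hg.
  pose proof (Rpower2_sub1_pos S HS) as Hk; fold Gam in Hg; fold k in Hk.
  set (p := lam * k * Gam hn).
  assert (Hp : 0 < p) by (apply Rmult_lt_0_compat; [nra | assumption]).
  assert (Hopt : p * Rad ^ 2 <= lam * k * Gam (h / Rad) * Rad ^ 2).
  { apply Rmult_le_compat_r; [apply pow2_ge_0|].
    apply Rmult_le_compat_l; [nra|].
    apply Hmin, Rdiv_le_0_compat; lra. }
  pose proof (two_sqrt_mul_le p Pc (Rad ^ 2) ltac:(lra) ltac:(lra) ltac:(apply pow_lt; lra)).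
  rewrite Phi_scale by assumption.
  replace (lam * k * Pc * Gam hn) with (p * Pc) by (unfold p; ring).
  replace (2 * A / (PI * Eb) * sqrt (p * Pc))
    with (A / (PI * Eb) * (2 * sqrt (p * Pc))) by (field; lra).
  apply Rle_ge, Rmult_le_compat_l; [apply Rdiv_le_0_compat; nra | lra].
Qed.

Lemma Rstar_pos lam : 0 < Rstar fc c N0 eta0 eta1 a b Pc lam S hn.
Proof. unfold Rstar, Rpower; apply exp_pos. Qed.

Lemma Phi_Rstar A lam : 0 < lam ->
  let Rs := Rstar fc c N0 eta0 eta1 a b Pc lam S hn in
  Phi fc c N0 eta0 eta1 a b A Eb Pc lam S Rs (Rs * hn)
  = 2 * A / (PI * Eb) * sqrt (lam * k * Pc * Gam hn).
Proof.
  intros Hlam Rs; pose proof PI_RGT_0.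
  pose proof (Gamma_pos fc c N0 eta0 eta1 a b Hfc Hc HN0 Heta0 Heta1 Ha hn) as Hg.
  pose proof (Rpower2_sub1_pos S HS) as Hk; fold Gam in Hg; fold k in Hk.
  set (p := lam * k * Gam hn).
  assert (Hp : 0 < p) by (apply Rmult_lt_0_compat; [nra | assumption]).
  assert (HRs : Rs ^ 2 = sqrt (Pc / p))
    by (apply Rpower_quarter_sqr, Rdiv_lt_0_compat; assumption).
  assert (HRs0 : 0 < Rs) by apply Rstar_pos.
  rewrite Phi_scale by assumption.
  replace (Rs * hn / Rs) with hn by (field; lra).
  fold p; rewrite HRs, two_sqrt_mul_eq by assumption.
  replace (lam * k * Pc * Gam hn) with (p * Pc) by (unfold p; ring).
  field; lra.
Qed.

End RecallFrequency.

Theorem theorem1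
  (fc c N0 eta0 eta1 a b : R)
  (Hfc : 0 < fc) (Hc : 0 < c) (HN0 : 0 < N0) (Heta0 : 0 < eta0)
  (Heta1 : 0 < eta1) (Ha : 0 < a) (Hb : 0 < b)
  (Eb Pc S hn : R)
  (HEb : 0 < Eb) (HPc : 0 < Pc) (HS : 0 < S) (Hhn : 0 <= hn)
  (Hmin : forall x, 0 <= x ->
     Gamma fc c N0 eta0 eta1 a b hn <= Gamma fc c N0 eta0 eta1 a b x) :
  (forall A lam, 0 < A -> 0 < lam ->
     (forall Rad h, 0 < Rad -> 0 <= h ->
        Phi fc c N0 eta0 eta1 a b A Eb Pc lam S Rad h
        >= 2 * A / (PI * Eb)
           * sqrt (lam * (Rpower 2 S - 1) * Pc * Gamma fc c N0 eta0 eta1 a b hn))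
     /\
     Phi fc c N0 eta0 eta1 a b A Eb Pc lam S
         (Rstar fc c N0 eta0 eta1 a b Pc lam S hn)
         (Rstar fc c N0 eta0 eta1 a b Pc lam S hn * hn)
     = 2 * A / (PI * Eb)
       * sqrt (lam * (Rpower 2 S - 1) * Pc * Gamma fc c N0 eta0 eta1 a b hn))
  /\
  (forall (kappa : nat) (Ab lamb : nat -> R),
     (forall i, (i < kappa)%nat -> 0 < Ab i /\ 0 < lamb i) ->
     (forall i, (i < kappa)%nat -> 0 < Rstar fc c N0 eta0 eta1 a b Pc (lamb i) S hn) /\
     forall (Rb hb : nat -> R),
       (forall i, (i < kappa)%nat -> 0 < Rb i /\ 0 <= hb i) ->
       rsum (fun i => Phi fc c N0 eta0 eta1 a b (Ab i) Eb Pc (lamb i) S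
                          (Rstar fc c N0 eta0 eta1 a b Pc (lamb i) S hn)
                          (Rstar fc c N0 eta0 eta1 a b Pc (lamb i) S hn * hn)) kappa
       <= rsum (fun i => Phi fc c N0 eta0 eta1 a b (Ab i) Eb Pc (lamb i) S
                          (Rb i) (hb i)) kappa).
Proof.
  split.
  - intros A lam HA Hlam; split.
    + intros Rad h HRad Hh; now apply Phi_ge.
    + now apply Phi_Rstar.
  - intros kappa Ab lamb Hpar; split.
    + intros i _; apply Rstar_pos.
    + intros Rb hb Hvar; apply rsum_le_compat; intros i Hi.
      destruct (Hpar i Hi) as [HA Hlam]; destruct (Hvar i Hi) as [HRad Hh].
      rewrite Phi_Rstar by assumption.
      apply Rge_le, Phi_ge; assumption.
Qed.
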